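(* Let $\alpha\in\mathrm{DC}_d$, $v_0\in C^\omega(\mathbb T^d,\mathbb R)$, and let $\lambda_0$ be small enough that the conclusion of the linear growth bound holds (i.e. for $\lambda\in(0,\lambda_0)$ there is $C'$ with $\|M_n(\alpha,\theta,E,0)\|\le C'|n|$ for all $E\in\Sigma_{\lambda,\alpha}$, $\theta$, $n\ne0$). Let $\lambda\in(0,\lambda_0)$ and let $g:\mathbb Z\to\mathbb R$ satisfy $\sum_{n\in\mathbb Z}|n||g(n)|<\infty$. Then there is a constant $C''$ (independent of $E$, $\theta$, $k$) such that for every $E\in\Sigma_{\lambda,\alpha}$, every $\theta\in\mathbb T^d$ and every $k\ge1$, \[\|\widetilde M_k(\alpha,\theta,E,0)\|\le C''k.\]
   Context: $\Sigma_{\lambda,\alpha}$ is the spectrum of $(H_{\lambda,\alpha,\theta}u)(n)=u(n+1)+u(n-1)+\lambda v_0(\theta+n\alpha)u(n)$. $M_k(\alpha,\theta,E,n)=A(n+k-1)\cdots A(n)$ with $A(j)=\begin{pmatrix}E-\lambda v_0(\theta+j\alpha)&-1\\1&0\end{pmatrix}$, and $\widetilde M_k$ is the analogous product with $A(j)$ replaced by $\begin{pmatrix}E-\lambda v_0(\theta+j\alpha)-g(j)&-1\\1&0\end{pmatrix}$. *)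

From HB Require Import structures.
From mathcomp Require Import all_boot all_order all_algebra.
From mathcomp Require Import all_classical all_reals all_analysis.
Set Implicit Arguments. Unset Strict Implicit. Unset Printing Implicit Defensive.
Import Order.TTheory GRing.Theory Num.Theory numFieldNormedType.Exports.
Local Open Scope ring_scope.

Section Defs.
Variable R : realType.
Variable d : nat.

(* points of R^d (lifts of points of T^d = R^d / Z^d) *)
Definition vecd := 'I_d -> R.

Definition shiftd (theta alpha : vecd) (j : int) : vecd :=
  fun i => theta i + j%:~R * alpha i.

Definition DC (alpha : vecd) : Prop :=
  exists gamma tau : R, 0 < gamma /\ (d%:R - 1 < tau) /\
    forall (k : 'I_d -> int), (exists i, k i != 0) -> forall j : int,
      gamma / ((\sum_(i < d) `|k i|%:~R) `^ tau)
        <= `| \sum_(i < d) (k i)%:~R * alpha i - j%:~R |.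

Definition periodic (f : vecd -> R) : Prop :=
  forall (theta : vecd) (m : 'I_d -> int),
    f (fun i => theta i + (m i)%:~R) = f theta.

(* degree-n homogeneous part of a multivariate power series with
   coefficients c indexed by multi-indices 'I_d -> nat *)
Definition mono_part (c : ('I_d -> nat) -> R) (y : vecd) (n : nat) : R :=
  \sum_(s : {ffun 'I_d -> 'I_n.+1} | (\sum_(i < d) (s i : nat))%N == n)
     c (fun i => (s i : nat)) * \prod_(i < d) y i ^+ (s i).

Definition analytic_at (f : vecd -> R) (x : vecd) : Prop :=
  exists (r : R) (c : ('I_d -> nat) -> R), 0 < r /\
    cvgn (series (fun n => mono_part (fun a => `|c a|) (fun _ => r) n)) /\
    forall y : vecd, (forall i, `|y i| < r) ->
      f (fun i => x i + y i) = limn (series (mono_part c y)).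

Definition analytic_torus (f : vecd -> R) : Prop :=
  periodic f /\ forall x, analytic_at f x.

Definition Hop (v0 : vecd -> R) (lam : R) (alpha theta : vecd)
  (u : int -> R) : int -> R :=
  fun n => u (n + 1) + u (n - 1) + lam * v0 (shiftd theta alpha n) * u n.

Definition sqsum (u : int -> R) : nat -> R :=
  series (fun n : nat => u (n%:Z) ^+ 2 + u (- (n.+1)%:Z) ^+ 2).
Definition l2 (u : int -> R) : Prop := cvgn (sqsum u).
Definition l2norm (u : int -> R) : R := Num.sqrt (limn (sqsum u)).

Definition resolvent (H : (int -> R) -> (int -> R)) (E : R) : Prop :=
  exists (Rv : (int -> R) -> (int -> R)) (C : R),
    forall u, l2 u ->
      [/\ l2 (Rv u), l2norm (Rv u) <= C * l2norm u,
          (fun n => H (Rv u) n - E * Rv u n) = u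
        & Rv (fun n => H u n - E * u n) = u].

(* Sigma_{lambda,alpha}: the spectrum (union over theta of the spectra of
   H_{lambda,alpha,theta}, which are all equal for alpha in DC_d). *)
Definition Sigma (v0 : vecd -> R) (lam : R) (alpha : vecd) (E : R) : Prop :=
  exists theta : vecd, ~ resolvent (Hop v0 lam alpha theta) E.

Definition mx2 (a b c e : R) : 'M[R]_2 :=
  \matrix_(i < 2, j < 2)
     if (i : nat) == 0%N then (if (j : nat) == 0%N then a else b)
     else (if (j : nat) == 0%N then c else e).

Definition Amat (v0 : vecd -> R) (lam : R) (alpha theta : vecd) (E : R)
  (j : int) : 'M[R]_2 :=
  mx2 (E - lam * v0 (shiftd theta alpha j)) (-1) 1 0.
Definition Atmat (v0 : vecd -> R) (lam : R) (alpha theta : vecd) (E : R)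
  (g : int -> R) (j : int) : 'M[R]_2 :=
  mx2 (E - lam * v0 (shiftd theta alpha j) - g j) (-1) 1 0.

Fixpoint Mprod (A : int -> 'M[R]_2) (n : int) (k : nat) : 'M[R]_2 :=
  match k with
  | 0 => 1%:M
  | k'.+1 => A (n + k'%:Z) *m Mprod A n k'
  end.

(* cocycle for all integer k: M_{-k}(n) = M_k(n-k)^{-1} *)
Definition Mint (A : int -> 'M[R]_2) (n : int) (k : int) : 'M[R]_2 :=
  match k with
  | Posz m => Mprod A n m
  | Negz m => invmx (Mprod A (n - (m.+1)%:Z) m.+1)
  end.

Definition M_k (v0 : vecd -> R) (lam : R) (alpha theta : vecd) (E : R)
  (n k : int) : 'M[R]_2 := Mint (Amat v0 lam alpha theta E) n k.
Definition Mt_k (v0 : vecd -> R) (lam : R) (alpha theta : vecd) (E : R)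
  (g : int -> R) (n : int) (k : nat) : 'M[R]_2 :=
  Mprod (Atmat v0 lam alpha theta E g) n k.

Definition vnorm2 (v : 'cV[R]_2) : R := Num.sqrt (\sum_(i < 2) v i ord0 ^+ 2).
Definition opnorm_le (M : 'M[R]_2) (c : R) : Prop :=
  forall v : 'cV[R]_2, vnorm2 (M *m v) <= c * vnorm2 v.

(* sum_{n in Z} |n| |g(n)| < oo *)
Definition weighted_summable (g : int -> R) : Prop :=
  cvgn (series (fun n : nat =>
     n%:R * `|g n%:Z| + (n.+1)%:R * `|g (- (n.+1)%:Z)|)).

End Defs.

From HB Require Import structures.
From mathcomp Require Import all_boot all_order all_algebra.
From mathcomp Require Import all_classical all_reals all_analysis.
From mathcomp Require Import ring lra.
Set Implicit Arguments. Unset Strict Implicit. Unset Printing Implicit Defensive.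
Import Order.TTheory GRing.Theory Num.Theory numFieldNormedType.Exports.
Local Open Scope ring_scope.

(* Write A~(j) = A(j) + Q(j), where Q(j) = -g(j) P and P = diag(1,0) has norm 1.
   Expanding the product telescopically (Duhamel's formula),
     M~_m = M_m + sum_{j<m} M_{m-j-1}(j+1) Q(j) M~_j .
   The hypothesis gives ||M_m(n)|| <= D max(m,1) uniformly in the starting
   point n (a shift of the start is a shift of the phase theta), so
     ||M~_m|| / max(m,1) <= D + sum_{j<m} D |g j| max(j,1) ||M~_j|| / max(j,1),
   and a discrete Gronwall inequality bounds the left side by
   D exp(D sum_j |g j| max(j,1)), which is finite since sum |n||g n| < oo. *)

Section OperatorNorm.
Context {R : realType}.

Lemma vnorm2E (v : 'cV[R]_2) :
  vnorm2 v = Num.sqrt (v ord0 ord0 ^+ 2 + v (lift ord0 ord0) ord0 ^+ 2).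
Proof. by rewrite /vnorm2 !big_ord_recl big_ord0 addr0. Qed.

Lemma vnorm2_ge0 (v : 'cV[R]_2) : 0 <= vnorm2 v.
Proof. exact: sqrtr_ge0. Qed.

Lemma minkowski2 (a1 a2 b1 b2 : R) :
  Num.sqrt ((a1 + b1) ^+ 2 + (a2 + b2) ^+ 2) <=
  Num.sqrt (a1 ^+ 2 + a2 ^+ 2) + Num.sqrt (b1 ^+ 2 + b2 ^+ 2).
Proof.
set X := a1 ^+ 2 + a2 ^+ 2; set Y := b1 ^+ 2 + b2 ^+ 2.
have X0 : 0 <= X by rewrite /X; nra.
have Y0 : 0 <= Y by rewrite /Y; nra.
have sum0 : 0 <= Num.sqrt X + Num.sqrt Y by rewrite addr_ge0 ?sqrtr_ge0.
rewrite -(ger0_norm sum0) -sqrtr_sqr ler_sqrt ?sqr_ge0 //.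
have -> : (Num.sqrt X + Num.sqrt Y) ^+ 2 = X + Y + 2 * Num.sqrt (X * Y).
  by rewrite sqrtrM // sqrrD !sqr_sqrtr //; ring.
have cauchy_schwarz : a1 * b1 + a2 * b2 <= Num.sqrt (X * Y).
  apply: le_trans (ler_norm _) _.
  rewrite -sqrtr_sqr ler_sqrt ?mulr_ge0 //.
  rewrite /X /Y; have := sqr_ge0 (a1 * b2 - a2 * b1); nra.
rewrite /X /Y in cauchy_schwarz *; nra.
Qed.

Lemma vnorm2D (u v : 'cV[R]_2) : vnorm2 (u + v) <= vnorm2 u + vnorm2 v.
Proof. rewrite !vnorm2E !mxE; exact: minkowski2. Qed.

Lemma vnorm2Z (c : R) (v : 'cV[R]_2) : vnorm2 (c *: v) = `|c| * vnorm2 v.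
Proof. by rewrite !vnorm2E !mxE !exprMn -mulrDr sqrtrM ?sqr_ge0 // sqrtr_sqr. Qed.

Lemma opnorm_le_trans (M : 'M[R]_2) a b :
  opnorm_le M a -> a <= b -> opnorm_le M b.
Proof. by move=> hM ab v; apply: le_trans (hM v) _; rewrite ler_wpM2r ?vnorm2_ge0. Qed.

Lemma opnorm_le_mul (M N : 'M[R]_2) a b : 0 <= a ->
  opnorm_le M a -> opnorm_le N b -> opnorm_le (M *m N) (a * b).
Proof.
move=> a0 hM hN v; rewrite -mulmxA; apply: le_trans (hM _) _.
by rewrite -mulrA ler_wpM2l.
Qed.

Lemma opnorm_le_add (M N : 'M[R]_2) a b :
  opnorm_le M a -> opnorm_le N b -> opnorm_le (M + N) (a + b).
Proof.
move=> hM hN v; rewrite mulmxDl; apply: le_trans (vnorm2D _ _) _.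
by rewrite mulrDl lerD.
Qed.

Lemma opnorm_le_scale (M : 'M[R]_2) a c :
  opnorm_le M a -> opnorm_le (c *: M) (`|c| * a).
Proof. by move=> hM v; rewrite -scalemxAl vnorm2Z -mulrA ler_wpM2l. Qed.

Lemma opnorm_le_id : opnorm_le (1%:M : 'M[R]_2) 1.
Proof. by move=> v; rewrite mul1mx mul1r. Qed.

Lemma opnorm_le_sum n (F : 'I_n -> 'M[R]_2) (c : 'I_n -> R) :
  (forall i, opnorm_le (F i) (c i)) -> opnorm_le (\sum_i F i) (\sum_i c i).
Proof.
move=> hF; elim/big_ind2: _ => //; last by move=> *; exact: opnorm_le_add.
by move=> v; rewrite mul0mx mul0r vnorm2E !mxE expr0n /= addr0 sqrtr0.
Qed.

(* The coordinate projection diag(1,0), through which the potential enters. *)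
Definition proj1mx : 'M[R]_2 := mx2 1 0 0 0.

Lemma opnorm_le_proj1mx : opnorm_le proj1mx 1.
Proof.
move=> v; rewrite mul1r !vnorm2E !mxE !big_ord_recl big_ord0 !mxE /=.
rewrite ler_wsqrtr // ?mul1r ?mul0r ?addr0 ?mxE /=.
by rewrite big_ord0 !add0r expr0n /= addr0 lerDl sqr_ge0.
Qed.

End OperatorNorm.

Section Perturbation.
Variable R : realType.
Implicit Types (A Q : int -> 'M[R]_2).

Lemma duhamel A Q (k : nat) :
  Mprod (fun j => A j + Q j) 0 k = Mprod A 0 k +
    \sum_(j < k) Mprod A j.+1 (k - j.+1) *m Q j *m Mprod (fun j => A j + Q j) 0 j.
Proof.
elim: k => [|k IH]; first by rewrite big_ord0 addr0.
rewrite /= mulmxDl {1}IH mulmxDr big_ord_recr /= subnn /= mul1mx addrA add0r.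
congr (_ + _); congr (_ + _); rewrite mulmx_sumr; apply: eq_bigr => j _.
rewrite (subSn (ltn_ord j)) /= !mulmxA; congr (_ *m _ *m _ *m _); congr (A _).
by rewrite -PoszD subnKC.
Qed.

(* The extremal solution of the discrete Gronwall inequality
   u_k <= D + sum_{j<k} D x_j u_j. *)
Fixpoint gronwall (D : R) (x : nat -> R) (k : nat) : R :=
  if k is k'.+1 then gronwall D x k' * (1 + D * x k') else D.

Lemma gronwallE D x k : gronwall D x k = D + \sum_(j < k) D * x j * gronwall D x j.
Proof.
elim: k => [|k IH] /=; first by rewrite big_ord0 addr0.
by rewrite big_ord_recr /= addrA -IH; ring.
Qed.

Lemma gronwall_le_exp D x k : 0 <= D -> (forall j, 0 <= x j) ->
  gronwall D x k <= D * expR (D * \sum_(j < k) x j).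
Proof.
move=> D0 x0; elim: k => [|k IH] /=; first by rewrite big_ord0 mulr0 expR0 mulr1.
rewrite big_ord_recr /= [in X in _ <= X]mulrDr expRD mulrA.
apply: le_trans (ler_wpM2r _ IH) _; first by rewrite addr_ge0 // mulr_ge0.
rewrite ler_wpM2l // ?mulr_ge0 ?expR_ge0 //; exact: expR_ge1Dx.
Qed.

Variables (A Q : int -> 'M[R]_2) (D : R) (q : nat -> R).
Hypothesis D0 : 0 <= D.
Hypothesis q0 : forall j, 0 <= q j.
Hypothesis A_linear : forall n m : nat, opnorm_le (Mprod A n m) (D * (maxn m 1)%:R).
Hypothesis Q_small : forall j : nat, opnorm_le (Q j) (q j).

Lemma perturbed_product_bound (m : nat) :
  opnorm_le (Mprod (fun j => A j + Q j) 0 m)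
    ((maxn m 1)%:R * gronwall D (fun j => q j * (maxn j 1)%:R) m).
Proof.
set x := fun j : nat => q j * (maxn j 1)%:R.
elim/ltn_ind: m => -[|m] IH.
  by apply: opnorm_le_trans (A_linear 0 0) _; rewrite /= mulrC.
rewrite duhamel gronwallE (maxn_idPl _) // mulrDr big_distrr /=.
apply: opnorm_le_add.
  by apply: opnorm_le_trans (A_linear 0 m.+1) _; rewrite (maxn_idPl _) // mulrC.
apply: opnorm_le_sum => j.
have -> : (m.+1)%:R * (D * x j * gronwall D x j) =
    (D * (m.+1)%:R * q j) * ((maxn j 1)%:R * gronwall D x j) by rewrite /x; ring.
apply: opnorm_le_mul; first by rewrite !mulr_ge0.
  apply: opnorm_le_trans (opnorm_le_mul _ (A_linear _ _) (Q_small j)) _.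
    by rewrite mulr_ge0.
  by rewrite ler_wpM2r // ler_wpM2l // ler_nat geq_max /= leq_subr.
exact: IH.
Qed.

Lemma perturbed_linear_growth (G : R) :
  (forall k, \sum_(j < k) q j * (maxn j 1)%:R <= G) ->
  forall m, (1 <= m)%N ->
  opnorm_le (Mprod (fun j => A j + Q j) 0 m) (D * expR (D * G) * m%:R).
Proof.
move=> sumG m m1; apply: opnorm_le_trans (perturbed_product_bound m) _.
rewrite (maxn_idPl m1) mulrC ler_wpM2r //.
apply: le_trans (gronwall_le_exp _ D0 _) _; first by move=> j; rewrite mulr_ge0.
by rewrite ler_wpM2l // ler_expR ler_wpM2l.
Qed.

End Perturbation.

Section Schrodinger.
Variables (R : realType) (d : nat) (v0 : ('I_d -> R) -> R) (lam : R).
Variables (alpha : 'I_d -> R) (E : R).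

Lemma Mprod_shift theta (n m : nat) :
  Mprod (Amat v0 lam alpha theta E) n m =
  Mprod (Amat v0 lam alpha (shiftd theta alpha n) E) 0 m.
Proof.
elim: m => [|m IH] //=; rewrite IH; congr (_ *m _).
rewrite /Amat; congr (mx2 (_ - _ * v0 _) _ _ _).
by apply/funext => i; rewrite /shiftd add0r -addrA -mulrDl -intrD.
Qed.

Lemma AtmatE theta g j :
  Atmat v0 lam alpha theta E g j = Amat v0 lam alpha theta E j + (- g j) *: @proj1mx R.
Proof.
apply/matrixP => i k; rewrite !mxE.
by case: i => [[|[|//]] ?]; case: k => [[|[|//]] ?] /=; rewrite ?mulr1 ?mulr0 ?addr0.
Qed.

Lemma block_linear_bound (C' : R) theta :
  (forall theta (n : int), n != 0 ->
     opnorm_le (M_k v0 lam alpha theta E 0 n) (C' * `|n|%:~R)) ->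
  forall n m : nat,
    opnorm_le (Mprod (Amat v0 lam alpha theta E) n m) ((`|C'| + 1) * (maxn m 1)%:R).
Proof.
move=> hC' n [|m].
  by apply: opnorm_le_trans opnorm_le_id _; rewrite mulr1 lerDr.
rewrite Mprod_shift (maxn_idPl _) //.
apply: opnorm_le_trans (hC' _ (Posz m.+1) isT) _.
by rewrite ler_wpM2r // (le_trans (ler_norm C')) ?lerDl.
Qed.

End Schrodinger.

Lemma weighted_partial_sums (R : realType) (g : int -> R) : weighted_summable g ->
  exists G, forall k, \sum_(j < k) `|g j| * (maxn j 1)%:R <= G.
Proof.
set u := fun n : nat => n%:R * `|g n%:Z| + (n.+1)%:R * `|g (- (n.+1)%:Z)|.
move=> hg; exists (`|g 0| + limn (series u)) => k.
have partial_le_lim N : \sum_(j < N) j%:R * `|g j| <= limn (series u).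
  apply: le_trans (nondecreasing_cvgn_le _ hg N).
    rewrite /series /= big_mkord; apply: ler_sum => i _.
    by rewrite lerDl mulr_ge0.
  by apply: nondecreasing_series => n _ _; rewrite addr_ge0 // mulr_ge0.
case: k => [|k]; first by rewrite big_ord0 addr_ge0 // (le_trans _ (partial_le_lim 0%N)) ?big_ord0.
rewrite big_ord_recl /= (_ : maxn 0 1 = 1)%N // mulr1 lerD2l.
apply: le_trans (partial_le_lim k.+1).
rewrite big_ord_recl /= mul0r add0r; apply: ler_sum => i _.
by rewrite mulrC /bump /= add1n (maxn_idPl _).
Qed.

Theorem lemma5p2 (R : realType) (d : nat) (hd : (0 < d)%N)
  (alpha : 'I_d -> R) (halpha : DC alpha)
  (v0 : ('I_d -> R) -> R) (hv0 : analytic_torus v0)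
  (lam0 : R) (hlam0 : 0 < lam0)
  (Hlin : forall lam : R, 0 < lam < lam0 ->
     exists C' : R, forall (E : R) (theta : 'I_d -> R) (n : int),
       Sigma v0 lam alpha E -> n != 0 ->
       opnorm_le (M_k v0 lam alpha theta E 0 n) (C' * `|n|%:~R))
  (lam : R) (hlam : 0 < lam < lam0)
  (g : int -> R) (hg : weighted_summable g) :
  exists C'' : R, forall (E : R) (theta : 'I_d -> R) (k : nat),
    Sigma v0 lam alpha E -> (1 <= k)%N ->
    opnorm_le (Mt_k v0 lam alpha theta E g 0 k) (C'' * k%:R).
Proof.
have [C' hC'] := Hlin lam hlam.
have [G hG] := weighted_partial_sums hg.
set D := `|C'| + 1.
have D0 : 0 <= D by rewrite addr_ge0.
exists (D * expR (D * G)) => E theta k hE k1.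
have A_linear := block_linear_bound theta (fun theta' n => hC' E theta' n hE).
have Q_small (j : nat) : opnorm_le ((- g j) *: @proj1mx R) `|g j|.
  by rewrite -normrN -[`|- g j|]mulr1; exact: opnorm_le_scale opnorm_le_proj1mx.
have -> : Mt_k v0 lam alpha theta E g 0 k =
    Mprod (fun j => Amat v0 lam alpha theta E j + (- g j) *: @proj1mx R) 0 k.
  by congr Mprod; apply/funext => j; rewrite AtmatE.
exact: perturbed_linear_growth D0 (fun j => normr_ge0 (g j)) A_linear Q_small G hG k k1.
Qed.
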